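(* Let $V\in C^2(\mathbb{R})$ be even with $V(s)\ge As^2-B$ for all $s\in\mathbb{R}$ (some $A>0$, $B\in\mathbb{R}$) and $V''(s)\le C_2$ for all $s$ (some $C_2>0$). Then there exists a constant $C>0$ such that for every $x\in\mathbb{Z}^d$, every $\gamma\in\mathbb{R}$, every $\xi(x)\in\mathbb{R}$ and every choice of real values $\phi(y)$ for the $2d$ nearest neighbours $y$ of $x$, $$\int_{\mathbb{R}}\exp\Big[-\tfrac12\sum_{y\in\mathbb{Z}^d,|y-x|=1}V(\phi(y)-\phi(x))+\xi(x)\phi(x)\Big]\mathrm{d}\phi(x)\ \ge\ C\exp\Big[-\tfrac12\sum_{y\in\mathbb{Z}^d,|y-x|=1}V(\phi(y)-\gamma)+\xi(x)\gamma\Big].$$ *)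

From HB Require Import structures.
From mathcomp Require Import all_boot all_order all_algebra.
From mathcomp Require Import all_classical all_reals all_analysis.
Set Implicit Arguments. Unset Strict Implicit. Unset Printing Implicit Defensive.
Import Order.TTheory GRing.Theory Num.Theory.
Import numFieldNormedType.Exports.
Local Open Scope classical_set_scope.
Local Open Scope ring_scope.

Definition lattice (d : nat) := {ffun 'I_d -> int}.

(* The nearest neighbour x + e_i (s = true) or x - e_i (s = false).
   As (i, s) ranges over 'I_d * bool these are exactly the 2d points y
   of Z^d with |y - x| = 1, each listed once. *)
Definition nbr (d : nat) (x : lattice d) (i : 'I_d) (s : bool) : lattice d :=
  [ffun j => x j + (if j == i then (if s then 1 else -1) else 0)%R].

Definition C2fun (R : realType) (V : R -> R) : Prop :=
  (forall s : R, derivable V s 1) /\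
  (forall s : R, derivable (derive1 V) s 1) /\
  continuous (derive1n 2 V).

Definition nbr_energy (R : realType) (d : nat) (V : R -> R)
  (phi : lattice d -> R) (x : lattice d) (t : R) : R :=
  \sum_(i < d) \sum_(s : bool) V (phi (nbr x i s) - t).

From HB Require Import structures.
From mathcomp Require Import all_boot all_order all_algebra.
From mathcomp Require Import all_classical all_reals all_analysis.
From mathcomp Require Import measurable_realfun ring lra.
Import Order.TTheory GRing.Theory Num.Theory.
Import numFieldNormedType.Exports.
Local Open Scope classical_set_scope.
Local Open Scope ring_scope.
Set Implicit Arguments. Unset Strict Implicit.

(* Since V'' <= C2, each V (phi y - t) lies below a parabola in t touching it
   at t = gamma, so the exponent of the integrand is at least its value at
   gamma plus a linear term minus d C2 (t - gamma)^2.  On the unit interval on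
   the side where the linear term is nonnegative the exponent therefore loses
   at most d C2, and integrating over that interval alone gives the bound with
   C = exp(- d C2). *)

Lemma derive1_MVT (R : realType) (g : R -> R) (a b : R) :
  (forall s, derivable g s 1) -> a <= b ->
  exists2 c, c \in `[a, b] & g b - g a = derive1 g c * (b - a).
Proof.
move=> dg ab; apply: MVT_segment => //.
  by move=> z _; rewrite derive1E; exact/derivableP/dg.
by apply: derivable_within_continuous => z _; exact: dg.
Qed.

Lemma derive1_bounded_increment (R : realType) (g : R -> R) (M a b : R) :
  (forall s, derivable g s 1) -> (forall s, derive1 g s <= M) -> a <= b ->
  g b - g a <= M * (b - a).
Proof.
move=> dg gM ab; have [c _ ->] := derive1_MVT dg ab.
by rewrite ler_wpM2r ?subr_ge0.
Qed.

Section QuadraticMajorant.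
Variables (R : realType) (V : R -> R) (C2 : R).
Hypothesis dV : forall s, derivable V s 1.
Hypothesis d2V : forall s, derivable (derive1 V) s 1.
Hypothesis V''_le : forall s, derive1n 2 V s <= C2.
Hypothesis C2_ge0 : 0 <= C2.

Let V'_increment u v : u <= v -> derive1 V v - derive1 V u <= C2 * (v - u).
Proof. exact: derive1_bounded_increment. Qed.

Lemma le_quadratic_majorant w h :
  V (w + h) <= V w + derive1 V w * h + C2 * h ^+ 2.
Proof.
have [h_lt0 | h_ge0] := ltP h 0.
  have [c] : exists2 c, c \in `[w + h, w] &
      V w - V (w + h) = derive1 V c * (w - (w + h)).
    by apply: derive1_MVT; rewrite // gerDl ltW.
  rewrite in_itv /= => /andP[c_ge c_le] mvt.
  have : (derive1 V w - derive1 V c) * (- h) <= C2 * (w - c) * (- h).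
    by rewrite ler_wpM2r ?V'_increment // oppr_ge0 ltW.
  have : C2 * ((w - c) * (- h)) <= C2 * h ^+ 2.
    by rewrite ler_wpM2l //; nra.
  lra.
have [c] : exists2 c, c \in `[w, w + h] &
    V (w + h) - V w = derive1 V c * (w + h - w).
  by apply: derive1_MVT; rewrite // lerDl.
rewrite in_itv /= => /andP[c_ge c_le] mvt.
have : (derive1 V c - derive1 V w) * h <= C2 * (c - w) * h.
  by rewrite ler_wpM2r ?V'_increment.
have : C2 * ((c - w) * h) <= C2 * h ^+ 2.
  by rewrite ler_wpM2l //; nra.
lra.
Qed.

Lemma nbr_energy_le_quadratic (d : nat) (phi : lattice d -> R) x gamma :
  exists slope, forall t,
    nbr_energy V phi x t <=
      nbr_energy V phi x gamma + slope * (gamma - t)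
      + 2 * d%:R * C2 * (gamma - t) ^+ 2.
Proof.
exists (\sum_(i < d) \sum_(s : bool) derive1 V (phi (nbr x i s) - gamma)) => t.
rewrite /nbr_energy.
have -> : 2 * d%:R * C2 * (gamma - t) ^+ 2 =
    \sum_(i < d) \sum_(s : bool) C2 * (gamma - t) ^+ 2.
  by rewrite sumr_const card_ord big_bool /= -mulr_natl; ring.
rewrite mulr_suml -!big_split /=; apply: ler_sum => i _.
rewrite mulr_suml -!big_split /=; apply: ler_sum => s _.
have -> : phi (nbr x i s) - t = (phi (nbr x i s) - gamma) + (gamma - t) by ring.
exact: le_quadratic_majorant.
Qed.

End QuadraticMajorant.

Lemma unit_interval_ge_quadratic_minorant (R : realType) (F : R -> R)
    (gamma a K : R) :
  0 <= K ->
  (forall t, F gamma + a * (t - gamma) - K * (t - gamma) ^+ 2 <= F t) ->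
  exists l, forall t, l <= t <= l + 1 -> F gamma - K <= F t.
Proof.
move=> K_ge0 F_ge; have [a_ge0 | a_lt0] := leP 0 a.
  exists gamma => t /andP[t_ge t_le]; have := F_ge t.
  have : 0 <= a * (t - gamma) by rewrite mulr_ge0 // subr_ge0.
  have : K * (t - gamma) ^+ 2 <= K by rewrite ler_piMr //; nra.
  lra.
exists (gamma - 1) => t /andP[t_ge t_le]; have := F_ge t.
have : 0 <= a * (t - gamma) by apply: mulr_le0; lra.
have : K * (t - gamma) ^+ 2 <= K by rewrite ler_piMr //; nra.
lra.
Qed.

Lemma integral_ge_on_interval (R : realType) (f : R -> R) (m a b : R) :
  measurable_fun [set: R] f -> (forall t, 0 <= f t) -> 0 <= m -> a <= b ->
  (forall t, a <= t <= b -> m <= f t) ->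
  ((m * (b - a))%:E <= \int[lebesgue_measure]_(t in [set: R]) (f t)%:E)%E.
Proof.
move=> mf f_ge0 m_ge0 ab f_ge.
have mI : measurable [set` `[a, b]] by exact: measurable_itv.
have sub_int : (\int[lebesgue_measure]_(t in [set` `[a, b]]) (f t)%:E <=
    \int[lebesgue_measure]_(t in [set: R]) (f t)%:E)%E.
  apply: ge0_subset_integral => //=.
  - by apply/measurable_EFinP; exact: mf.
  - by move=> t _; rewrite lee_fin.
apply: le_trans sub_int.
have [a_lt_b | b_le_a] := ltP a b; last first.
  have -> : b - a = 0 by lra.
  by rewrite mulr0 integral_ge0 // => t _; rewrite lee_fin.
have cst_int : (\int[lebesgue_measure]_(t in [set` `[a, b]]) (cst m%:E t) <=
    \int[lebesgue_measure]_(t in [set` `[a, b]]) (f t)%:E)%E.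
  apply: ge0_le_integral => //=.
    by apply/(measurable_EFinP _ f); exact: measurable_funS mf.
apply: le_trans cst_int.
by rewrite integral_cst //= lebesgue_measure_itv /= lte_fin a_lt_b -EFinD -EFinM.
Qed.

Lemma measurable_nbr_energy (R : realType) (d : nat) (V : R -> R)
    (phi : lattice d -> R) x :
  continuous V -> measurable_fun [set: R] (nbr_energy V phi x).
Proof.
move=> cV; apply: measurable_sum => i; apply: measurable_sum => s.
apply: measurableT_comp; first exact: continuous_measurable_fun.
exact: measurable_funB.
Qed.

Theorem lemma3p1 (R : realType) (d : nat) (V : R -> R)
  (HV : C2fun V)
  (Heven : forall s : R, V (- s) = V s)
  (A B : R) (HA : 0 < A) (Hlow : forall s : R, A * s ^+ 2 - B <= V s)
  (C2 : R) (HC2 : 0 < C2) (Hupp : forall s : R, derive1n 2 V s <= C2) :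
  exists C : R, 0 < C /\
    forall (x : lattice d) (gamma xi : R) (phi : lattice d -> R),
      ((C * expR (- (1/2) * nbr_energy V phi x gamma + xi * gamma))%:E
       <= \int[lebesgue_measure]_(t in [set: R])
            (expR (- (1/2) * nbr_energy V phi x t + xi * t))%:E)%E.
Proof.
case: HV => dV [d2V _].
have cV : continuous V.
  by move=> s; apply/differentiable_continuous; rewrite -derivable1_diffP.
set K := d%:R * C2; have K_ge0 : 0 <= K by rewrite mulr_ge0 // ltW.
exists (expR (- K)); split=> [|x gamma xi phi]; first exact: expR_gt0.
pose F t := - (1/2) * nbr_energy V phi x t + xi * t.
change ((expR (- K) * expR (F gamma))%:E <=
  \int[lebesgue_measure]_(t in [set: R]) (expR (F t))%:E)%E.
have [slope E_le] := nbr_energy_le_quadratic dV d2V Hupp (ltW HC2) phi x gamma.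
have F_ge t : F gamma + (slope / 2 + xi) * (t - gamma) - K * (t - gamma) ^+ 2 <= F t.
  by have := E_le t; rewrite /F /K; lra.
have [l F_ge_l] := unit_interval_ge_quadratic_minorant K_ge0 F_ge.
have mF : measurable_fun [set: R] (fun t => expR (F t)).
  apply: measurableT_comp; first exact: continuous_measurable_fun (@continuous_expR R).
  by apply: measurable_funD; apply: measurable_funM => //;
    exact: measurable_nbr_energy.
apply: le_trans (integral_ge_on_interval
  (m := expR (F gamma - K)) (a := l) (b := l + 1) mF _ _ _ _).
- by rewrite [l + 1]addrC addrK mulr1 [F gamma - K]addrC (expRD (- K)).
- by move=> t; rewrite expR_ge0.
- by rewrite expR_ge0.
- by rewrite lerDl.
- by move=> t /F_ge_l; rewrite ler_expR.
Qed.
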